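(* There is an absolute constant $c>0$ such that the following holds. Let $q$ and $p$ be positive integers, let $\delta=p-q/2$ (so $p=q/2+\delta$), let $W\subseteq\{0,1,\dots,q-1\}$, let $Q>0$ with $Q|\delta|<q/3$, and let $b$ be an integer with $|2b|<Q$. Then $$\left|f_W\left(\frac{2b}{q}\right)-f_W\left(\frac{b}{p}\right)\right|\ \le\ c\,\frac{|\delta| Q |W|}{q}.$$
   Context: $e(u)=\exp(2\pi i u)$ and, for a finite set of integers $W$, $f_W(t)=\sum_{s\in W}e(st)$. *)

From Stdlib Require Import Reals List.
From Coquelicot Require Import Coquelicot.
Open Scope R_scope.

Definition e (u : R) : C := (cos (2 * PI * u), sin (2 * PI * u)).

(* f_W(t) = sum_{s in W} e(s t), W a finite set of naturals given as a duplicate-free list *)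
Definition fW (W : list nat) (t : R) : C :=
  fold_right Cplus 0%C (map (fun s => e (INR s * t)) W).

(* Every frequency s < q moves by |s (2b/q - b/p)| = (s/q) |2b| |delta| / p, and
   when b <> 0 the hypotheses force |delta| < q/6, hence p > q/3, so each term
   moves by at most 3 Q |delta| / q.  Since e is (4 pi)-Lipschitz, summing over
   W gives the bound with c = 12 pi. *)
From Stdlib Require Import Reals List ZArith Lra Lia.
From Coquelicot Require Import Coquelicot.
Open Scope R_scope.

Lemma Rabs_sin_sub_le (a b : R) : Rabs (sin a - sin b) <= Rabs (a - b).
Proof.
  destruct (MVT_abs sin cos b a) as [c [-> _]].
  { intros; apply derivable_pt_lim_sin. }
  pose proof (COS_bound c).
  rewrite <- (Rmult_1_l (Rabs (a - b))) at 2.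
  apply Rmult_le_compat_r; [apply Rabs_pos | apply Rabs_le; lra].
Qed.

Lemma Rabs_cos_sub_le (a b : R) : Rabs (cos a - cos b) <= Rabs (a - b).
Proof.
  rewrite !cos_sin.
  replace (a - b) with ((PI / 2 + a) - (PI / 2 + b)) by ring.
  apply Rabs_sin_sub_le.
Qed.

Lemma Cmod_le_Rabs_add (x y : R) : Cmod (x, y) <= Rabs x + Rabs y.
Proof.
  replace (x, y) with (RtoC x + RtoC y * Ci)%C
    by (apply injective_projections; simpl; ring).
  eapply Rle_trans; [apply Cmod_triangle|].
  rewrite Cmod_mult, Cmod_Ci, !Cmod_R; lra.
Qed.

Lemma Cmod_e_sub_le (x y : R) : Cmod (e x - e y) <= 4 * PI * Rabs (x - y).
Proof.
  unfold e, Cminus, Cplus, Copp; simpl.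
  eapply Rle_trans; [apply Cmod_le_Rabs_add|].
  pose proof (Rabs_cos_sub_le (2 * PI * x) (2 * PI * y)).
  pose proof (Rabs_sin_sub_le (2 * PI * x) (2 * PI * y)).
  replace (2 * PI * x - 2 * PI * y) with (2 * PI * (x - y)) in * by ring.
  rewrite Rabs_mult, (Rabs_right (2 * PI)) in * by (pose proof PI_RGT_0; lra).
  unfold Rminus in *; lra.
Qed.

Lemma Cmod_sum_map_sub_le {A : Type} (f g : A -> C) (l : list A) (M : R) :
  (forall x, In x l -> Cmod (f x - g x) <= M) ->
  Cmod (fold_right Cplus 0%C (map f l) - fold_right Cplus 0%C (map g l))
    <= INR (length l) * M.
Proof.
  induction l as [|x l IH]; intros Hfg; cbn [length map fold_right].
  - replace (RtoC 0 - RtoC 0)%C with (RtoC 0) by ring; rewrite Cmod_0, INR_0; lra.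
  - specialize (IH (fun y Hy => Hfg y (or_intror Hy))).
    pose proof (Hfg x (or_introl eq_refl)).
    set (F := fold_right Cplus 0%C (map f l)) in *.
    set (G := fold_right Cplus 0%C (map g l)) in *.
    replace (f x + F - (g x + G))%C with ((f x - g x) + (F - G))%C by ring.
    eapply Rle_trans; [apply Cmod_triangle|].
    rewrite S_INR; lra.
Qed.

Lemma Cmod_fW_sub_le (W : list nat) (t1 t2 M : R) :
  (forall s, In s W -> Cmod (e (INR s * t1) - e (INR s * t2)) <= M) ->
  Cmod (fW W t1 - fW W t2) <= INR (length W) * M.
Proof. apply Cmod_sum_map_sub_le. Qed.

Section Frequencies.

Variables (q p : nat) (Q : R) (b : Z).
Hypotheses (q_gt0 : (0 < q)%nat) (p_gt0 : (0 < p)%nat).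
Hypothesis Q_delta_lt : Q * Rabs (INR p - INR q / 2) < INR q / 3.
Hypothesis b_lt : Rabs (2 * IZR b) < Q.

Lemma Rabs_2b_mul_q_le : Rabs (2 * IZR b) * INR q <= 3 * Q * INR p.
Proof.
  assert (q_pos : 0 < INR q) by (apply lt_0_INR; lia).
  assert (p_pos : 0 < INR p) by (apply lt_0_INR; lia).
  destruct (Z.eq_dec b 0) as [->|b_neq0].
  { rewrite Rmult_0_r, Rabs_R0 in *; nra. }
  assert (b_ge1 : 1 <= Rabs (IZR b)).
  { rewrite <- abs_IZR; apply IZR_le; lia. }
  rewrite Rabs_mult, (Rabs_right 2) in * by lra.
  assert (delta_lt : Rabs (INR p - INR q / 2) < INR q / 6).
  { pose proof (Rabs_pos (INR p - INR q / 2)); nra. }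
  assert (INR q <= 3 * INR p).
  { pose proof (Rle_abs (- (INR p - INR q / 2))) as H.
    rewrite Rabs_Ropp in H; lra. }
  nra.
Qed.

Lemma Rabs_phase_sub_le (s : nat) : (s < q)%nat ->
  Rabs (INR s * (2 * IZR b / INR q) - INR s * (IZR b / INR p))
    <= 3 * (Rabs (INR p - INR q / 2) * Q) / INR q.
Proof.
  intros s_lt.
  assert (q_pos : 0 < INR q) by (apply lt_0_INR; lia).
  assert (p_pos : 0 < INR p) by (apply lt_0_INR; lia).
  assert (s_le : INR s <= INR q) by (apply le_INR; lia).
  pose proof (pos_INR s).
  pose proof Rabs_2b_mul_q_le.
  replace (INR s * (2 * IZR b / INR q) - INR s * (IZR b / INR p))
    with (INR s * (2 * IZR b) * (INR p - INR q / 2) / (INR q * INR p))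
    by (field; lra).
  set (B := 2 * IZR b) in *; set (d := INR p - INR q / 2) in *.
  pose proof (Rabs_pos B); pose proof (Rabs_pos d).
  rewrite Rabs_div, !Rabs_mult, (Rabs_right (INR s)), (Rabs_right (INR q)),
    (Rabs_right (INR p)) by nra.
  apply Rmult_le_reg_r with (INR q * INR p); [nra|].
  field_simplify; [| lra | split; lra].
  apply Rle_trans with (INR q * Rabs B * Rabs d); [apply Rmult_le_compat_r; nra | nra].
Qed.

End Frequencies.

Theorem lemma2 :
  exists c : R, 0 < c /\
  forall (q p : nat) (W : list nat) (Q : R) (b : Z),
    (0 < q)%nat -> (0 < p)%nat ->
    NoDup W -> List.Forall (fun s => (s < q)%nat) W ->
    0 < Q ->
    Q * Rabs (INR p - INR q / 2) < INR q / 3 ->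
    Rabs (2 * IZR b) < Q ->
    Cmod (Cminus (fW W (2 * IZR b / INR q)) (fW W (IZR b / INR p)))
      <= c * (Rabs (INR p - INR q / 2) * Q * INR (length W) / INR q).
Proof.
  pose proof PI_RGT_0.
  exists (12 * PI); split; [lra|].
  intros q p W Q b q_gt0 p_gt0 _ W_lt _ Q_delta_lt b_lt.
  rewrite Forall_forall in W_lt.
  eapply Rle_trans.
  { apply (Cmod_fW_sub_le W _ _ (4 * PI * (3 * (Rabs (INR p - INR q / 2) * Q) / INR q))).
    intros s s_in.
    eapply Rle_trans; [apply Cmod_e_sub_le|].
    apply Rmult_le_compat_l; [lra|].
    apply Rabs_phase_sub_le; auto. }
  assert (0 < INR q) by (apply lt_0_INR; lia).
  right; field; lra.
Qed.
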